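(* Let $q\ge 2$ and $n\ge 2$ be integers and let $m=n-1$. Under uniform transmission over the $1$-deletion channel with input length $n$, $$\max_{{\boldsymbol y}\in\Sigma_q^{m}} \mathsf{H}^{\mathsf{In}}_{1\text{-}\mathsf{Del}}({\boldsymbol y}) = \log_2(nq)-\frac{2m}{nq},$$ and this maximum is attained only by channel outputs ${\boldsymbol y}$ with $\rho({\boldsymbol y})=m$ runs (i.e., all runs of length one).
   Context: $\Sigma_q=\{0,1,\dots,q-1\}$. For sequences ${\boldsymbol x}$ of length $N$ and ${\boldsymbol y}$ of length $\ell\le N$, the embedding number $\omega_{{\boldsymbol y}}({\boldsymbol x})$ is the number of index tuples $1\le i_1<\dots<i_\ell\le N$ with $x_{i_j}=y_j$ for all $j$. The $k$-deletion channel with input length $n$ maps ${\boldsymbol x}\in\Sigma_q^n$ to ${\boldsymbol y}\in\Sigma_q^{n-k}$ with probability $\Pr\{{\boldsymbol y}\mid{\boldsymbol x}\}=\omega_{{\boldsymbol y}}({\boldsymbol x})/\binom{n}{k}$ (exactly $k$ positions, chosen uniformly among the $\binom nk$ subsets, are deleted). Under uniform transmission, the input $X$ is uniform on $\Sigma_q^n$, and for an output ${\boldsymbol y}$ the input entropy is $\mathsf{H}^{\mathsf{In}}_{k\text{-}\mathsf{Del}}({\boldsymbol y})=H(X\mid Y={\boldsymbol y})=-\sum_{{\boldsymbol x}}P({\boldsymbol x}\mid{\boldsymbol y})\log_2 P({\boldsymbol x}\mid{\boldsymbol y})$ where $P({\boldsymbol x}\mid {\boldsymbol y})=\Pr\{{\boldsymbol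 y}\mid{\boldsymbol x}\}/\sum_{{\boldsymbol x}'\in\Sigma_q^n}\Pr\{{\boldsymbol y}\mid{\boldsymbol x}'\}$. A run of a sequence is a maximal block of identical consecutive symbols; $\rho({\boldsymbol y})$ is the number of runs of ${\boldsymbol y}$. *)

From HB Require Import structures.
From mathcomp Require Import all_boot all_order all_algebra.
From mathcomp Require Import reals exp.
Set Implicit Arguments. Unset Strict Implicit. Unset Printing Implicit Defensive.
Import Order.TTheory GRing.Theory Num.Theory.
Local Open Scope ring_scope.

Definition log2 {R : realType} (x : R) : R := ln x / ln 2.

Definition plogp {R : realType} (p : R) : R := if p == 0 then 0 else p * log2 p.

(* embedding number omega_y(x): number of index selections i_1 < ... < i_l
   (encoded as a bit mask of length |x| with exactly |y| ones) such that the
   selected subsequence of x equals y. *)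
Definition emb {T : eqType} (y x : seq T) : nat :=
  #|[pred b : (size x).-tuple bool | (count id b == size y) && (mask b x == y)]|.

Definition delPr {R : realType} {q n k : nat}
  (y : (n - k).-tuple 'I_q) (x : n.-tuple 'I_q) : R :=
  (emb y x)%:R / ('C(n, k))%:R.

(* posterior P(x | y) under uniform input *)
Definition post {R : realType} {q n k : nat}
  (y : (n - k).-tuple 'I_q) (x : n.-tuple 'I_q) : R :=
  delPr (R:=R) y x / \sum_(x' : n.-tuple 'I_q) delPr (R:=R) y x'.

(* input entropy H^In_{k-Del}(y) = H(X | Y = y) *)
Definition Hin {R : realType} (q n k : nat) (y : (n - k).-tuple 'I_q) : R :=
  - \sum_(x : n.-tuple 'I_q) plogp (post (R:=R) y x).

Definition runs {T : eqType} (s : seq T) : nat :=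
  if s is a :: t then (count id (pairmap (fun u v => u != v) a t)).+1 else 0.

From HB Require Import structures.
From mathcomp Require Import all_boot all_order all_algebra.
From mathcomp Require Import reals exp.
From mathcomp Require Import zify ring.
Set Implicit Arguments. Unset Strict Implicit. Unset Printing Implicit Defensive.
Import Order.TTheory GRing.Theory Num.Theory.

(* For |y| = m, an input x has omega_y(x) > 0 iff it is an insertion [ins i a y]
   with (i, a) in [0, m] x Sigma_q, and omega_y(x) counts the pairs producing x.
   So the posterior is the image of the uniform law on these nq pairs, and
   H(X | Y = y) = log2 (nq) - (1/nq) sum_p log2 mu(p), where mu(p) is the number
   of pairs producing the same input as p.  Now log2 e >= 2 (1 - 1/e) for e >= 1,
   with equality iff e <= 2, while sum_p 1/mu(p) is the number of distinct
   insertions, which is nq - m whatever y is: each class has exactly one pair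
   whose letter differs from the letter preceding it.  Hence
   sum_p log2 mu(p) >= 2m, with equality iff every mu(p) <= 2, i.e. iff no two
   adjacent letters of y coincide. *)

Section Insertion.
Variable T : Type.
Implicit Types (a b : T) (s : seq T).

Definition ins i a s := take i s ++ a :: drop i s.

Definition del i s := take i s ++ drop i.+1 s.

Lemma ins0 a s : ins 0 a s = a :: s.
Proof. by rewrite /ins take0 drop0. Qed.

Lemma insS i a b s : ins i.+1 a (b :: s) = b :: ins i a s.
Proof. by []. Qed.

Lemma size_ins i a s : size (ins i a s) = (size s).+1.
Proof. by rewrite /ins size_cat /= addnS -size_cat cat_take_drop. Qed.

Lemma nth_ins x0 i a s : i <= size s -> nth x0 (ins i a s) i = a.
Proof. by move=> le_is; rewrite /ins nth_cat size_takel // ltnn subnn. Qed.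

Lemma del_ins i a s : i <= size s -> del i (ins i a s) = s.
Proof.
move=> le_is; rewrite /del /ins take_size_cat ?size_takel // -cat_rcons.
by rewrite drop_size_cat ?cat_take_drop // size_rcons size_takel.
Qed.

Lemma ins_del x0 i s : i < size s -> ins i (nth x0 s i) (del i s) = s.
Proof.
move=> lt_is; have le_is := ltnW lt_is.
rewrite /ins /del take_size_cat ?drop_size_cat ?size_takel //.
by rewrite -drop_nth // cat_take_drop.
Qed.

Lemma insS_eq x0 i a s : i < size s -> nth x0 s i = a -> ins i.+1 a s = ins i a s.
Proof.
elim: s i => [|b s IHs] [|i] //= lt_is sia; first by rewrite insS !ins0 sia.
by rewrite !insS IHs.
Qed.

Lemma ins_eq_ins x0 i j a b s : i < j <= size s -> ins i a s = ins j b s ->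
  b = a /\ forall k, i <= k < j -> nth x0 s k = a.
Proof.
elim: s i j a b => [|c s IHs] [|i] [|j] a b //=; rewrite ?andbF ?ins0 ?insS //.
- case: j => [|j] le_js [-> e]; first by rewrite ins0 in e; case: e => ->; split=> // -[].
  rewrite -ins0 in e; have [-> sc] := IHs 0 j.+1 c b le_js e.
  by split=> // -[|k] //= /sc.
- move=> ltij [e]; have [-> sa] := IHs i j a b ltij e.
  by split=> // -[|k] //= /sa.
Qed.

End Insertion.

Definition skip_mask k i : bitseq := nseq i true ++ false :: nseq (k - i) true.

Lemma size_skip_mask k i : i <= k -> size (skip_mask k i) = k.+1.
Proof. by move=> le_ik; rewrite size_cat /= !size_nseq; lia. Qed.

Lemma count_skip_mask k i : i <= k -> count id (skip_mask k i) = k.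
Proof. by move=> le_ik; rewrite count_cat /= !count_nseq /=; lia. Qed.

Lemma index_skip_mask k i : index false (skip_mask k i) = i.
Proof. by rewrite /skip_mask; elim: i (k - i) => [|i IHi] r //=; rewrite IHi. Qed.

Lemma skip_maskP k (b : bitseq) :
  size b = k.+1 -> count id b = k -> b = skip_mask k (index false b).
Proof.
elim: b k => [|[] b IHb] k //= [size_b]; rewrite /skip_mask.
- case: k size_b => [|k] size_b; first by case: b size_b {IHb}.
  by rewrite add1n => -[/(IHb _ size_b) {1}->].
- rewrite add0n subn0 => count_b; congr (_ :: _).
  rewrite -size_b; apply/all_pred1P; rewrite all_count size_b -count_b.
  by apply/eqP/eq_count => -[].
Qed.

Lemma mask_skip_mask (T : Type) k i (x : seq T) :
  size x = k.+1 -> i <= k -> mask (skip_mask k i) x = del i x.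
Proof.
move=> size_x le_ik; have le_ix : i <= size x by rewrite size_x ltnW.
rewrite /skip_mask -[x in mask _ x](cat_take_drop i) mask_cat ?size_nseq ?size_takel //.
rewrite mask_true ?size_takel // /del; congr (_ ++ _).
have : drop i.+1 x = behead (drop i x) by rewrite -add1n -drop_drop drop1.
case: (drop i x) (size_drop i x) => [|c t] /=; rewrite size_x; first lia.
by move=> size_t ->; rewrite mask_true //; lia.
Qed.

Definition alternating (T : eqType) (s : seq T) := sorted (fun a b => a != b) s.

Lemma runs_alternating (T : eqType) (s : seq T) : alternating s -> runs s = size s.
Proof.
case: s => [|a t] // alt; congr _.+1.
by elim: t a alt => [|b t IHt] a //= /andP[-> /IHt ->].
Qed.

Lemma exists_alternating (T : finType) k : 1 < #|T| -> exists s : k.-tuple T, alternating s.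
Proof.
case/card_gt1P => a [b] [_ _ neq_ab].
have size_s : size (mkseq (fun i => if odd i then b else a) k) == k by rewrite size_mkseq.
exists (Tuple size_s); apply/(sortedP a) => j; rewrite /= size_mkseq => lt_j1k.
by rewrite !nth_mkseq ?(ltnW lt_j1k) //=; case: (odd j); rewrite // eq_sym.
Qed.

Section InsertionTuple.
Variables (T : finType) (m : nat) (s : seq T).
Hypothesis size_s : size s = m.
Implicit Types p : 'I_m.+1 * T.

Definition ins_tuple p : m.+1.-tuple T :=
  insubd (nseq_tuple m.+1 p.2) (ins p.1 p.2 s).
(* Otherwise [/=] unfolds [insubd], and normalising the result is very slow. *)
Arguments ins_tuple : simpl never.

Lemma ins_tupleE p : ins_tuple p = ins p.1 p.2 s :> seq T.
Proof. by rewrite insubdK // unfold_in size_ins size_s. Qed.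

Lemma eq_ins_tuple p p' :
  (ins_tuple p == ins_tuple p') = (ins p.1 p.2 s == ins p'.1 p'.2 s).
Proof. by rewrite -val_eqE /= !ins_tupleE. Qed.

Definition ins_mult p := #|[pred p' | ins_tuple p' == ins_tuple p]|.

Lemma ins_mult_gt0 p : 0 < ins_mult p.
Proof. by apply/card_gt0P; exists p; rewrite inE. Qed.

Lemma emb_ins_tuple (x : m.+1.-tuple T) : emb s x = #|[pred p | ins_tuple p == x]|.
Proof.
have le_im (i : 'I_m.+1) : i <= m by rewrite -ltnS.
have skip_tupleP (i : 'I_m.+1) : size (skip_mask m i) == m.+1.
  by rewrite size_skip_mask.
pose skip_tuple p := Tuple (skip_tupleP p.1).
rewrite /emb size_tuple size_s -(@card_in_imset _ _ skip_tuple); last first.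
  move=> [i a] [j b]; rewrite !inE -!val_eqE /= !ins_tupleE /= => /eqP xia /eqP xjb.
  move/(congr1 (index false \o val)); rewrite /= !index_skip_mask => /val_inj ij.
  by subst j; rewrite -(@nth_ins _ a i a s) ?size_s // xia -xjb nth_ins ?size_s.
apply: eq_card => b; rewrite inE; apply/andP/imsetP => [[/eqP count_b /eqP mask_b]|].
  have eb : val b = skip_mask m (index false b) by rewrite -skip_maskP ?size_tuple.
  have lt_im : index false b < m.+1.
    by rewrite -{2}(size_tuple b) index_mem eb mem_cat inE eqxx orbT.
  move: (index false b) lt_im eb => i lt_im eb; pose i' := Ordinal lt_im.
  exists (i', tnth x i'); last exact: val_inj.
  rewrite inE -val_eqE /= ins_tupleE /= -mask_b eb mask_skip_mask ?size_tuple //.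
  by rewrite (tnth_nth (tnth x i')) ins_del ?size_tuple.
move=> [[i a]]; rewrite inE -val_eqE /= ins_tupleE /= => /eqP <- ->.
by rewrite count_skip_mask // mask_skip_mask ?size_ins ?size_s // del_ins ?size_s.
Qed.

(* The inserted letter starts a run of [ins p.1 p.2 s]. *)
Definition leftmost p := (p.1 == 0 :> nat) || (p.2 != nth p.2 s p.1.-1).

Lemma exists_leftmost p : exists2 p', leftmost p' & ins_tuple p' = ins_tuple p.
Proof.
case: p => -[i lt_im] a; elim: i lt_im => [|i IHi] lt_im; first by exists (Ordinal lt_im, a).
have [sia | sia] := eqVneq (nth a s i) a; last first.
  by exists (Ordinal lt_im, a); rewrite /leftmost //= eq_sym.
have [p' lp' e'] := IHi (ltnW lt_im); exists p' => //; rewrite e'.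
by apply/eqP; rewrite eq_ins_tuple /= (@insS_eq _ a) ?size_s.
Qed.

Lemma leftmost_inj : {in leftmost &, injective ins_tuple}.
Proof.
move=> [i a] [j b]; rewrite !unfold_in /leftmost /= => li lj /eqP.
rewrite eq_ins_tuple /= => /eqP e.
wlog le_ij : i j a b li lj e / i <= j.
  by move=> H; case: (leqP i j) => [|/ltnW] ij; [|symmetry]; apply: H.
have le_js : j <= size s by rewrite size_s -ltnS.
case: ltngtP le_ij => // [lt_ij _ | /val_inj ij _]; last first.
  by subst j; move/(congr1 (nth a ^~ i)): e; rewrite !nth_ins // => ->.
have lt_ijs : i < j <= size s by rewrite lt_ij.
have [ba sa] := @ins_eq_ins _ a i j a b s lt_ijs e.
by move: lj; rewrite ba (sa j.-1) ?eqxx ?orbF => [/eqP|]; lia.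
Qed.

Lemma card_leftmost : #|[set p | leftmost p]| + m = m.+1 * #|T|.
Proof.
case E: s => [|x0 t].
  have m0 : m = 0 by rewrite -size_s E.
  have -> : [set p | leftmost p] = setT.
    by apply/setP => -[i a]; rewrite !inE /leftmost -leqn0 -ltnS -m0 ltn_ord.
  by rewrite cardsT card_prod card_ord m0 addn0.
have compl : ~: [set p | leftmost p] = [set (lift ord0 j, nth x0 s j) | j : 'I_m].
  apply/setP => -[i a]; rewrite !inE /leftmost /= negb_or negbK.
  apply/andP/imsetP => [[i_neq0 /eqP ->] | [j _ [-> ->]]]; last first.
    by split=> //; apply/eqP/set_nth_default; rewrite size_s.
  have lt_im : i.-1 < m by move: (ltn_ord i) i_neq0; lia.
  exists (Ordinal lt_im) => //; congr (_, _).
    by apply: val_inj; rewrite /= /bump /=; move: i_neq0; lia.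
  by apply: set_nth_default; rewrite size_s.
have := cardsC [set p | leftmost p]; rewrite compl card_imset ?card_ord.
  by rewrite card_prod card_ord => <-.
by move=> j k [] /eqP; rewrite eqn_add2l => /eqP /val_inj.
Qed.

Lemma card_ins_image : #|[set ins_tuple p | p : 'I_m.+1 * T]| + m = m.+1 * #|T|.
Proof.
have -> : [set ins_tuple p | p : 'I_m.+1 * T] = ins_tuple @: [set p | leftmost p].
  apply/setP => x; apply/imsetP/imsetP => [[p _ ->] | [p _ ->]]; last by exists p.
  by have [p' lp' <-] := exists_leftmost p; exists p'; rewrite ?inE.
rewrite card_in_imset ?card_leftmost // => p p'; rewrite !inE; exact: leftmost_inj.
Qed.

(* Two pairs of one class with indices of equal parity would force two equal
   adjacent letters, so the parity of the index is injective on a class. *)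
Lemma ins_mult_le2 p : alternating s -> ins_mult p <= 2.
Proof.
case: p => i a alt_s; rewrite /ins_mult -[2]card_bool.
apply: (@leq_card_in _ _ (fun p' => odd p'.1)) => -[j b] [k c].
rewrite !inE !eq_ins_tuple /= => /eqP eb /eqP ec; rewrite -{}ec in eb.
wlog le_jk : j k b c eb / j <= k.
  by move=> H; case: (leqP j k) => [|/ltnW] jk; [|symmetry]; apply: H.
have le_ks : k <= size s by rewrite size_s -ltnS.
case: ltngtP le_jk => // [lt_jk _ odd_jk | /val_inj jk _ _]; last first.
  by subst k; move/(congr1 (nth b ^~ j)): eb; rewrite !nth_ins // => ->.
have lt_jks : j < k <= size s by rewrite lt_jk.
have [_ sb] := @ins_eq_ins _ b j k b c s lt_jks eb.
have lt_j1k : j.+1 < k.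
  rewrite ltn_neqAle lt_jk andbT; apply/eqP => kj.
  by move: odd_jk; rewrite -kj /=; case: (odd j).
move/sortedP: alt_s => /(_ b j); rewrite !sb ?leqnn ?leqnSn ?lt_j1k ?(ltnW lt_j1k) //.
by rewrite eqxx; move/(_ (leq_trans lt_j1k le_ks)).
Qed.

Lemma ins_mult_gt2 x0 j : j.+1 < m -> nth x0 s j = nth x0 s j.+1 ->
  2 < ins_mult (inord j, nth x0 s j).
Proof.
move=> lt_j1m sj; set c := nth x0 s j.
pose P : seq ('I_m.+1 * T) := [:: (inord j, c); (inord j.+1, c); (inord j.+2, c)].
have uniq_P : uniq P by rewrite /= !inE !xpair_eqE eqxx !andbT -!val_eqE /= !inordK; lia.
rewrite /ins_mult -[3]/(size P) -(card_uniqP uniq_P); apply/subset_leq_card/subsetP.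
have ins1 : ins j.+1 c s = ins j c s by rewrite (@insS_eq _ x0) ?size_s //; lia.
have ins2 : ins j.+2 c s = ins j.+1 c s by rewrite (@insS_eq _ x0) ?size_s // -sj.
move=> p; rewrite !inE => /or3P[] /eqP ->; rewrite eq_ins_tuple /= !inordK //; try lia.
- by rewrite ins1.
- by rewrite ins2 ins1.
Qed.

Lemma alternatingE : alternating s = [forall p, ins_mult p <= 2].
Proof.
apply/idP/forallP => [alt_s p | le2]; first exact: ins_mult_le2.
case E: s => [//|x0 t]; rewrite -E.
apply/(sortedP x0) => j lt_j1s; apply/negP => /eqP sj.
by have := le2 (inord j, nth x0 s j); rewrite leqNgt ins_mult_gt2 // -size_s.
Qed.

End InsertionTuple.

Lemma exp2_double_pred_lt e : 2 < e -> 2 ^ (2 * e.-1) < e ^ e.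
Proof.
rewrite expnM; case: e => [|[|[|[|e]]]] //= _.
by apply: (@leq_trans (4 ^ e.+4)); rewrite ?ltn_exp2l ?leq_exp2r.
Qed.

Section FiberSums.
Variables (I J : finType) (F : I -> J).

Lemma sum_card_fiber : \sum_(x : J) #|[pred i | F i == x]| = #|I|.
Proof.
rewrite -sum1_card (partition_big F xpredT) //=.
by apply: eq_bigr => x _; rewrite -(sum1_card [pred i | F i == x]).
Qed.

Local Open Scope ring_scope.

Lemma sumr_card_fiber (R : nmodType) (g : J -> R) :
  \sum_(x : J) g x *+ #|[pred i | F i == x]| = \sum_(i : I) g (F i).
Proof.
rewrite (partition_big F xpredT) //=; apply: eq_bigr => x _.
rewrite (eq_bigr (fun=> g x)) => [|i /eqP -> //].
by rewrite -(sumr_const [pred i | F i == x]).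
Qed.

Lemma sumr_inv_card_fiber (R : numFieldType) :
  \sum_(i : I) (#|[pred i' | F i' == F i]|%:R : R)^-1 = #|[set F i | i : I]|%:R.
Proof.
rewrite -(sumr_card_fiber (fun x => (#|[pred i | F i == x]|%:R : R)^-1)).
rewrite -sum1_card natr_sum [RHS]big_mkcond /=; apply: eq_bigr => x _.
case: (boolP (x \in [set F i | i : I])) => [/imsetP [i _ ->] | Fx].
  rewrite -[_^-1 *+ _]mulr_natr mulVf // pnatr_eq0 -lt0n.
  by apply/card_gt0P; exists i; rewrite inE.
suff -> : #|[pred i | F i == x]| = 0%N by rewrite mulr0n.
by apply: eq_card0 => i; rewrite !inE; apply: contraNF Fx => /eqP <-; apply: imset_f.
Qed.

Lemma entropy_uniform_image (R : realType) : (0 < #|I|)%N ->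
  - \sum_(x : J) plogp (#|[pred i | F i == x]|%:R / #|I|%:R : R) =
  log2 (#|I|%:R : R) - (\sum_(i : I) log2 (#|[pred i' | F i' == F i]|%:R : R)) / #|I|%:R.
Proof.
move=> I_gt0; set N : R := #|I|%:R; have N_gt0 : 0 < N by rewrite ltr0n.
have ln2_neq0 : ln (2 : R) != 0 by rewrite gt_eqF // ln_gt0 // ltr1n.
have plogpE e : plogp (e%:R / N) = (log2 e%:R / N - log2 N / N) *+ e.
  rewrite /plogp; case: (posnP e) => [-> | e_gt0]; first by rewrite mul0r eqxx mulr0n.
  rewrite mulf_eq0 invr_eq0 !pnatr_eq0 (gtn_eqF e_gt0) (gtn_eqF I_gt0) /=.
  rewrite /log2 ln_div ?posrE ?ltr0n //.
  by rewrite -mulr_natr; field; rewrite ln2_neq0 gt_eqF.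
under eq_bigr do rewrite plogpE.
rewrite sumr_card_fiber sumrB -mulr_suml sumr_const -/N -mulr_natr.
by field; rewrite gt_eqF.
Qed.

End FiberSums.

Local Open Scope ring_scope.

Lemma log2_natr_leif (R : realType) e : (0 < e)%N ->
  2 * (1 - e%:R^-1) <= log2 (e%:R : R) ?= iff (e <= 2)%N.
Proof.
move=> e_gt0; have ln2_gt0 : 0 < ln (2 : R) by rewrite ln_gt0 // ltr1n.
apply/leifP; case: leqP => [le_e2 | lt2e].
  case: e e_gt0 le_e2 => [|[|[|e]]] //= _ _; apply/eqP; rewrite /log2.
    by rewrite invr1 subrr mulr0 ln1 mul0r.
  by rewrite divff ?gt_eqF //; field.
have e_pos : 0 < (e%:R : R) by rewrite ltr0n.
have ineq : ln 2 * (2 * (e%:R - 1)) < ln e%:R * e%:R :> R.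
  have : ln ((2 ^ (2 * e.-1))%:R) < ln ((e ^ e)%:R : R).
    by rewrite ltr_ln ?posrE ?ltr0n ?expn_gt0 ?e_gt0 ?ltr_nat ?(exp2_double_pred_lt lt2e).
  rewrite !natrX !lnXn ?ltr0n; [|by []..].
  by rewrite -[_ *+ (2 * _)]mulr_natr -[_ *+ e]mulr_natr natrM -subn1 (natrB _ e_gt0).
rewrite /log2 ltr_pdivlMr // -(ltr_pM2r e_pos).
suff -> : 2 * (1 - e%:R^-1) * ln 2 * e%:R = ln 2 * (2 * (e%:R - 1)) :> R by [].
by field; rewrite gt_eqF.
Qed.

Lemma sum_log2_ins_mult_leif (R : realType) (T : finType) m (s : seq T) : size s = m ->
  2 * m%:R <= \sum_(p : 'I_m.+1 * T) log2 ((ins_mult s p)%:R : R) ?= iff alternating s.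
Proof.
move=> size_s; rewrite (alternatingE size_s).
have := leif_sum (P := xpredT) (fun (p : 'I_m.+1 * T) _ => log2_natr_leif R (ins_mult_gt0 s p)).
suff -> : \sum_(p : 'I_m.+1 * T) 2 * (1 - (ins_mult s p)%:R^-1) = 2 * m%:R :> R by [].
have card_img := congr1 (GRing.natmul (1 : R)) (card_ins_image size_s).
rewrite -mulr_sumr sumrB sumr_const card_prod card_ord /ins_mult sumr_inv_card_fiber.
by rewrite -card_img natrD; congr (2 * _); rewrite addrC addKr.
Qed.

Lemma Hin1E (R : realType) q m (y : (m.+1 - 1).-tuple 'I_q) : (0 < q)%N ->
  Hin y = log2 ((m.+1 * q)%:R : R) -
          (\sum_(p : 'I_m.+1 * 'I_q) log2 ((ins_mult y p)%:R : R)) / (m.+1 * q)%:R.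
Proof.
move=> q_gt0; have size_y : size y = m by rewrite size_tuple subn1.
have card_pairs : #|{: 'I_m.+1 * 'I_q}| = (m.+1 * q)%N by rewrite card_prod !card_ord.
have postE x : post (R := R) y x =
    #|[pred p | ins_tuple y p == x]|%:R / #|{: 'I_m.+1 * 'I_q}|%:R.
  rewrite /post /delPr -mulr_suml.
  under eq_bigr do rewrite emb_ins_tuple //.
  rewrite emb_ins_tuple // -natr_sum sum_card_fiber bin1.
  by rewrite invf_div mulrA divfK // pnatr_eq0.
rewrite /Hin; under eq_bigr do rewrite postE.
by rewrite entropy_uniform_image card_pairs // muln_gt0 q_gt0.
Qed.

Lemma Hin1_leif (R : realType) q n (y : (n - 1).-tuple 'I_q) : (0 < q)%N -> (0 < n)%N ->
  Hin y <= log2 ((n * q)%:R : R) - (2 * (n - 1))%:R / (n * q)%:R ?= iff alternating y.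
Proof.
case: n y => [|m] y q_gt0 // _; have size_y : size y = m by rewrite size_tuple subn1.
have N_gt0 : 0 < ((m.+1 * q)%:R : R) by rewrite ltr0n muln_gt0 q_gt0.
have [le_sum eq_sum] := sum_log2_ins_mult_leif R size_y.
have -> : (2 * (m.+1 - 1))%:R = 2 * m%:R :> R by rewrite subn1 natrM.
rewrite Hin1E //; split.
  by rewrite lerD2l lerN2 ler_pM2r ?invr_gt0.
rewrite -eq_sum (inj_eq (addrI _)) (inj_eq oppr_inj) eq_sym.
by rewrite (inj_eq (mulIf _)) // invr_eq0 gt_eqF.
Qed.

Theorem theorem5 (R : realType) (q n : nat) :
  (2 <= q)%N -> (2 <= n)%N ->
  let m := (n - 1)%N in
  let v : R := log2 ((n * q)%:R) - (2 * m)%:R / (n * q)%:R in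
  (exists y : m.-tuple 'I_q, @Hin R q n 1 y = v) /\
  (forall y : m.-tuple 'I_q, @Hin R q n 1 y <= v) /\
  (forall y : m.-tuple 'I_q, @Hin R q n 1 y = v -> runs y = m).
Proof.
move=> q_ge2 n_ge2 m v.
have q_gt0 : (0 < q)%N by apply: ltnW.
have n_gt0 : (0 < n)%N by apply: ltnW.
have Hin_leif (y : m.-tuple 'I_q) := Hin1_leif R y q_gt0 n_gt0.
split; [|split].
- have [y alt_y] : exists y : m.-tuple 'I_q, alternating y.
    by apply: exists_alternating; rewrite card_ord.
  by exists y; apply/eqP; rewrite (Hin_leif y).2.
- by move=> y; exact: (Hin_leif y).1.
- move=> y /eqP; rewrite (Hin_leif y).2 => /runs_alternating ->.
  exact: size_tuple.
Qed.
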